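(* Let $n\geq 3$ and let $\tau$ be a maximal simplex of $\mathrm{VR}(\mathbb{Z}^n;2)$. Then one of the following holds: (i) $\tau=N[x]$ for some $x\in\mathbb{Z}^n$; (ii) $\tau=\{x,x^{i_0},x^{j_0},x^{i_0,j_0}\}$ for some $x\in\mathbb{Z}^n$ and $i_0,j_0\in[n]^{\pm}$; (iii) $\tau=\{x,x^{i_0,j_0},x^{j_0,k_0},x^{i_0,k_0}\}$ for some $x\in\mathbb{Z}^n$ and $i_0,j_0,k_0\in[n]^{\pm}$.
   Context: $\mathbb{Z}^n$ carries the Manhattan metric $d(x,y)=\sum_{i=1}^n|x_i-y_i|$; $\mathrm{VR}(X;r)$ is the simplicial complex on $X$ whose simplices are finite subsets of diameter at most $r$. Write $[n]=\{1,\ldots,n\}$, $[-n]=\{-1,\ldots,-n\}$, $[n]^{\pm}=[n]\cup[-n]$. For $x\in\mathbb{Z}^n$ and $i_1,\ldots,i_k\in[n]^{\pm}$ with pairwise distinct absolute values, $x^{i_1,\ldots,i_k}\in\mathbb{Z}^n$ is obtained from $x$ by adding $1$ to the $j$-th coordinate for each $j\in\{i_1,\ldots,i_k\}\cap[n]$ and subtracting $1$ from the $j$-th coordinate for each $j$ with $-j\in\{i_1,\ldots,i_k\}$, other coordinates unchanged. $N[x]=\{y\in\mathbb{Z}^n: d(x,y)\leq 1\}$ is the closed neighbourhood of $x$ in the grid graph. *)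

From HB Require Import structures.
From mathcomp Require Import all_boot all_order all_algebra.
From mathcomp Require Import finmap.
Set Implicit Arguments. Unset Strict Implicit. Unset Printing Implicit Defensive.
Import Order.TTheory GRing.Theory Num.Theory.
Local Open Scope fset_scope.

Definition pt (n : nat) := {ffun 'I_n -> int}.

Definition mdist (n : nat) (x y : pt n) : nat :=
  (\sum_(i < n) `|(x i - y i)%R|%N)%N.

Definition vr2_simplex (n : nat) (t : {fset pt n}) : Prop :=
  t != fset0 /\ (forall x y, x \in t -> y \in t -> mdist x y <= 2).

Definition vr2_maximal (n : nat) (t : {fset pt n}) : Prop :=
  vr2_simplex t /\
  (forall s : {fset pt n}, vr2_simplex s -> t `<=` s -> s = t).

(* Signed index in [n]^{+-}: (j, true) is +j, (j, false) is -j. *)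
Definition sidx (n : nat) := ('I_n * bool)%type.

Definition shift1 (n : nat) (x : pt n) (i : sidx n) : pt n :=
  [ffun j => if j == i.1 then (x j + (if i.2 then 1 else -1))%R else x j].

(* x^{i_1,...,i_k}; only meaningful when the absolute values are distinct. *)
Definition shiftl (n : nat) (x : pt n) (s : seq (sidx n)) : pt n :=
  foldr (fun i y => shift1 y i) x s.

Definition distinct_abs (n : nat) (s : seq (sidx n)) : bool :=
  uniq (map fst s).

From HB Require Import structures.
From mathcomp Require Import all_boot all_order all_algebra.
From mathcomp Require Import finmap zify.
Set Implicit Arguments. Unset Strict Implicit. Unset Printing Implicit Defensive.
Import Order.TTheory GRing.Theory Num.Theory.

(* Pick a point a of t. Every point of t is within distance 2 of a, so it is
   a, a^k, a^{k,k} or a^{k,l} with |k| <> |l|.  If t contains both y and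
   y^{i,i}, every point of t is within distance 1 of the midpoint y^i.
   Otherwise, if t contains no a^{i,j}, it lies in N[a].  Given a^{i,j} in t,
   the diameter bound forces every a^k in t to have k in {i,j} and every
   a^{k,l} in t to share an index with {i,j}.  Hence t lies in the square
   {a, a^i, a^j, a^{i,j}}, or t contains a fork a^{p,q}, a^{p,m}; then t lies
   in the tetrahedron {a, a^{p,q}, a^{q,m}, a^{p,m}} if a^{q,m} is in t, and in
   N[a^p] otherwise.  Neighbourhoods, squares and tetrahedra are simplices, so
   maximality turns each inclusion into an equality. *)

Section Metric.
Variable n : nat.
Implicit Types (x y z c : pt n) (i j k l : sidx n) (p q r : 'I_n).

Lemma neq_of_abs i j : i.1 != j.1 -> i <> j.
Proof. by move=> ij eq_ij; rewrite eq_ij eqxx in ij. Qed.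

Lemma shift1C x i j : shift1 (shift1 x i) j = shift1 (shift1 x j) i.
Proof.
by apply/ffunP => p; rewrite !ffunE; case: (p == i.1); case: (p == j.1); lia.
Qed.

Lemma mdistC x y : mdist x y = mdist y x.
Proof. by apply: eq_bigr => p _; lia. Qed.

Lemma mdistxx x : mdist x x = 0.
Proof. by apply/eqP; rewrite sum_nat_eq0; apply/forallP => p; rewrite subrr. Qed.

Lemma mdist_triangle x y z : mdist x z <= mdist x y + mdist y z.
Proof. by rewrite /mdist -big_split /=; apply: leq_sum => p _; lia. Qed.

Lemma mdist_bigD1 x y p :
  mdist x y = absz (x p - y p) + \sum_(q | q != p) absz (x q - y q).
Proof. exact: bigD1. Qed.

Lemma mdist_bigD2 x y p q : p != q ->
  mdist x y = absz (x p - y p) + absz (x q - y q) +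
              \sum_(r | (r != p) && (r != q)) absz (x r - y r).
Proof.
move=> pq; rewrite (mdist_bigD1 x y p) -addnA (bigD1 q) /=; last by rewrite eq_sym.
by congr (_ + (_ + _)); apply: eq_bigl => r; rewrite andbC.
Qed.

Lemma mdist_ge3 x y p q r : p != q -> p != r -> q != r ->
  absz (x p - y p) + absz (x q - y q) + absz (x r - y r) <= mdist x y.
Proof.
move=> pq pr qr; rewrite (mdist_bigD2 x y pq) leq_add2l (bigD1 r) /=.
  exact: leq_addr.
by rewrite eq_sym pr eq_sym qr.
Qed.

Lemma mdist_shift1 x i : mdist x (shift1 x i) = 1.
Proof.
rewrite (mdist_bigD1 _ _ i.1) ffunE eqxx big1 => [|p /negbTE p_i]; last first.
  by rewrite ffunE p_i subrr.
by case: i.2; lia.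
Qed.

Lemma mdist_shift1l x i : mdist (shift1 x i) x = 1.
Proof. by rewrite mdistC mdist_shift1. Qed.

Lemma mdist_le2_via c y z : mdist y c <= 1 -> mdist c z <= 1 -> mdist y z <= 2.
Proof. by move=> yc cz; apply: leq_trans (mdist_triangle y c z) _; lia. Qed.

Lemma eq_off_sum0 (P : pred 'I_n) x y :
  \sum_(p | P p) absz (x p - y p) = 0 -> forall p, P p -> x p = y p.
Proof.
by move/eqP; rewrite sum_nat_eq0 => /forallP xy p Pp; have := xy p; rewrite Pp; lia.
Qed.

Lemma exists_neq_coord x y : x != y -> exists p, x p != y p.
Proof.
move=> xy; apply/existsP; apply: contraR xy => /existsPn same.
by apply/eqP/ffunP => p; apply/eqP; rewrite -[_ == _]negbK same.
Qed.

Lemma shift1_of_step x y p :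
  (forall q, q != p -> x q = y q) -> absz (y p - x p) = 1 ->
  y = shift1 x (p, (0 < y p - x p)%R).
Proof.
move=> same step; apply/ffunP => q; rewrite ffunE /=.
have [->|qp] := eqVneq q p; first by case: ifP; lia.
by rewrite same.
Qed.

Lemma double_shift1_of_step x y p :
  (forall q, q != p -> x q = y q) -> absz (y p - x p) = 2 ->
  y = shift1 (shift1 x (p, (0 < y p - x p)%R)) (p, (0 < y p - x p)%R).
Proof.
move=> same step; apply/ffunP => q; rewrite !ffunE /=.
have [->|qp] := eqVneq q p; first by case: ifP; lia.
by rewrite same.
Qed.

Lemma shift2_of_steps x y p q : p != q ->
  (forall r, (r != p) && (r != q) -> x r = y r) ->
  absz (y p - x p) = 1 -> absz (y q - x q) = 1 ->
  y = shift1 (shift1 x (q, (0 < y q - x q)%R)) (p, (0 < y p - x p)%R).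
Proof.
move=> pq same step_p step_q; apply/ffunP => r; rewrite !ffunE /=.
have [->|rp] := eqVneq r p; first by rewrite (negbTE pq); case: ifP; lia.
have [->|rq] := eqVneq r q; first by case: ifP; lia.
by rewrite same ?rp ?rq.
Qed.

Lemma mdist_le1_cases c y : mdist c y <= 1 -> y = c \/ exists i, y = shift1 c i.
Proof.
have [-> _|yc] := eqVneq y c; first by left.
have [p cy_p] : exists p, c p != y p by apply: exists_neq_coord; rewrite eq_sym.
rewrite (mdist_bigD1 c y p) => le1; right.
have rest0 : \sum_(q | q != p) absz (c q - y q) = 0 by lia.
by eexists; apply: shift1_of_step (eq_off_sum0 rest0) _; lia.
Qed.

Lemma mdist_le2_cases c y : mdist c y <= 2 ->
  [\/ y = c, exists i, y = shift1 c i, exists i, y = shift1 (shift1 c i) i |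
      exists i j, i.1 != j.1 /\ y = shift1 (shift1 c j) i].
Proof.
have [-> _|yc] := eqVneq y c; first by constructor 1.
have [p cy_p] : exists p, c p != y p by apply: exists_neq_coord; rewrite eq_sym.
move=> le2; move: (le2); rewrite (mdist_bigD1 c y p) => le2_p.
have [rest0|] := eqVneq (\sum_(q | q != p) absz (c q - y q)) 0.
  have [step|step] : absz (y p - c p) = 1 \/ absz (y p - c p) = 2 by lia.
    by constructor 2; eexists; apply: shift1_of_step (eq_off_sum0 rest0) step.
  by constructor 3; eexists; apply: double_shift1_of_step (eq_off_sum0 rest0) step.
rewrite sum_nat_eq0 => /forallPn[q /=]; rewrite negb_imply => /andP[qp cy_q].
rewrite eq_sym in qp; move: le2; rewrite (mdist_bigD2 c y qp) => le2_pq.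
have rest0 : \sum_(r | (r != p) && (r != q)) absz (c r - y r) = 0 by lia.
constructor 4; exists (p, (0 < y p - c p)%R), (q, (0 < y q - c q)%R); split=> //.
by apply: shift2_of_steps qp (eq_off_sum0 rest0) _ _; lia.
Qed.

Lemma sum_off_shift1 y i w :
  \sum_(p | p != i.1) absz (shift1 y i p - w p) =
  \sum_(p | p != i.1) absz (y p - w p).
Proof. by apply: eq_bigr => p /negbTE p_i; rewrite ffunE p_i. Qed.

Lemma mdist_midpoint_le1 y i w : mdist y w <= 2 ->
  mdist (shift1 (shift1 y i) i) w <= 2 -> mdist (shift1 y i) w <= 1.
Proof.
rewrite !(mdist_bigD1 _ _ i.1) !sum_off_shift1 !ffunE eqxx.
by case: i.2; lia.
Qed.

Ltac split_coords :=
  repeat (rewrite ?eqxx /=; match goal with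
    | H : is_true (?p != ?p) |- _ => by rewrite eqxx in H
    | |- context [?p == ?q] => case: (eqVneq p q) => [?|?]; try subst end).

Ltac coord_lia :=
  move: (mdist _ _) => ?;
  repeat match goal with H : is_true (_ != _) |- _ => clear H end; lia.

(* If k lies on the axis of i or j, the two points differ by 2 on that axis
   and by 1 on the other one; otherwise they differ by 1 on three axes. *)
Lemma mdist_shift1_shift2_ge3 a i j k : i.1 != j.1 -> k != i -> k != j ->
  3 <= mdist (shift1 a k) (shift1 (shift1 a j) i).
Proof.
case: i j k => [p b] [q c] [r d] /= pq /eqP ki /eqP kj.
have [rpq|] := boolP ((r == p) || (r == q)).
  move: rpq (mdist_bigD2 (shift1 a (r, d)) (shift1 (shift1 a (q, c)) (p, b)) pq).
  rewrite !ffunE /=; split_coords;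
    by case: b ki kj; case: c; case: d; (congruence || coord_lia).
rewrite negb_or eq_sym [r == q]eq_sym => /andP[pr qr]; clear ki kj.
move: (mdist_ge3 (shift1 a (r, d)) (shift1 (shift1 a (q, c)) (p, b)) pq pr qr).
by rewrite !ffunE /=; split_coords; case: b; case: c; case: d; coord_lia.
Qed.

(* If k or l lies on the axis of i or j, the axes of i and j already
   contribute 3; otherwise the axes of i, j and k contribute 1 each. *)
Lemma mdist_shift2_shift2_ge3 a i j k l : i.1 != j.1 -> k.1 != l.1 ->
  k != i -> k != j -> l != i -> l != j ->
  3 <= mdist (shift1 (shift1 a j) i) (shift1 (shift1 a l) k).
Proof.
case: i j k l => [p b] [q c] [r d] [s e] /= pq rs /eqP ki /eqP kj /eqP li /eqP lj.
have [meet|] := boolP [|| r == p, r == q, s == p | s == q].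
  move: meet rs.
  move: (mdist_bigD2 (shift1 (shift1 a (q, c)) (p, b))
                     (shift1 (shift1 a (s, e)) (r, d)) pq).
  rewrite !ffunE /=; split_coords;
    by case: b ki kj li lj; case: c; case: d; case: e; (congruence || coord_lia).
rewrite !negb_or eq_sym [r == q]eq_sym => /and4P[pr qr sp sq]; clear ki kj li lj.
move: (mdist_ge3 (shift1 (shift1 a (q, c)) (p, b))
                 (shift1 (shift1 a (s, e)) (r, d)) pq pr qr).
by rewrite !ffunE /=; split_coords; case: b; case: c; case: d; case: e; coord_lia.
Qed.

End Metric.

Local Open Scope fset_scope.

Ltac mdist_le1 := first [ by rewrite mdistxx | by rewrite mdist_shift1
  | by rewrite mdist_shift1l | by rewrite shift1C mdist_shift1
  | by rewrite shift1C mdist_shift1l ].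

Ltac through c := apply: (mdist_le2_via (c := c)); mdist_le1.

Section Simplices.
Variable n : nat.
Implicit Types (x y z c : pt n) (i j k : sidx n).

Definition nbhd c : {fset pt n} := c |` [fset shift1 c i | i : sidx n].

Definition square x i j : {fset pt n} :=
  [fset x; shiftl x [:: i]; shiftl x [:: j]; shiftl x [:: i; j]].

Definition tetra x i j k : {fset pt n} :=
  [fset x; shiftl x [:: i; j]; shiftl x [:: j; k]; shiftl x [:: i; k]].

Lemma in_nbhd c y : (y \in nbhd c) = (mdist c y <= 1)%N.
Proof.
apply/idP/idP => [|/mdist_le1_cases[->|[i ->]]].
- by rewrite !inE => /orP[/eqP ->|/imfsetP[i _ ->]]; rewrite ?mdistxx ?mdist_shift1.
- by rewrite !inE eqxx.
- by rewrite !inE; apply/orP; right; apply/imfsetP; exists i.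
Qed.

Lemma nbhd_simplex c : vr2_simplex (nbhd c).
Proof.
split; first by apply/fset0Pn; exists c; rewrite in_nbhd mdistxx.
by move=> y z; rewrite !in_nbhd mdistC; apply: mdist_le2_via.
Qed.

Lemma square_simplex x i j : vr2_simplex (square x i j).
Proof.
split; first by apply/fset0Pn; exists x; rewrite !inE eqxx.
move=> y z; rewrite /square /shiftl /= !inE -!orbA.
by move=> /or4P[] /eqP-> /or4P[] /eqP->;
  first [through x | through (shift1 x i) | through (shift1 x j)].
Qed.

Lemma tetra_simplex x i j k : vr2_simplex (tetra x i j k).
Proof.
split; first by apply/fset0Pn; exists x; rewrite !inE eqxx.
move=> y z; rewrite /tetra /shiftl /= !inE -!orbA.
by move=> /or4P[] /eqP-> /or4P[] /eqP->;
  first [through x | through (shift1 x i) | through (shift1 x j) | through (shift1 x k)].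
Qed.

End Simplices.

Definition covered n (t : {fset pt n}) : Prop :=
  [\/ exists c, t `<=` nbhd c,
      exists x i j, distinct_abs [:: i; j] /\ t `<=` square x i j
    | exists x i j k, distinct_abs [:: i; j; k] /\ t `<=` tetra x i j k].

Section NoDoubleStep.
Variables (n : nat) (t : {fset pt n}).
Implicit Types (w : pt n) (i j k l p q m : sidx n).
Hypothesis t_diam : forall y z, y \in t -> z \in t -> (mdist y z <= 2)%N.
Hypothesis t_no_double : forall y i, y \in t -> shift1 (shift1 y i) i \notin t.
Variable a : pt n.
Hypothesis a_in_t : a \in t.

Lemma mem_cases w : w \in t ->
  [\/ w = a, exists k, w = shift1 a k
    | exists k l, k.1 != l.1 /\ w = shift1 (shift1 a l) k].
Proof.
move=> wt; case/mdist_le2_cases: (t_diam a_in_t wt).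
- by move=> ->; constructor 1.
- by case=> k ->; constructor 2; exists k.
- by case=> k w_kk; move: (t_no_double k a_in_t); rewrite -w_kk wt.
- by case=> k [l [kl ->]]; constructor 3; exists k, l.
Qed.

Lemma shift1_mem_cases i j k : i.1 != j.1 ->
  shift1 (shift1 a j) i \in t -> shift1 a k \in t -> k = i \/ k = j.
Proof.
move=> ij aij ak; have [->|ki] := eqVneq k i; first by left.
have [->|kj] := eqVneq k j; first by right.
have := mdist_shift1_shift2_ge3 a ij ki kj; have := t_diam ak aij; lia.
Qed.

Lemma shift2_mem_meet i j k l : i.1 != j.1 -> k.1 != l.1 ->
  shift1 (shift1 a j) i \in t -> shift1 (shift1 a l) k \in t ->
  [\/ k = i, k = j, l = i | l = j].
Proof.
move=> ij kl aij akl.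
have [->|ki] := eqVneq k i; first by constructor 1.
have [->|kj] := eqVneq k j; first by constructor 2.
have [->|li] := eqVneq l i; first by constructor 3.
have [->|lj] := eqVneq l j; first by constructor 4.
have := mdist_shift2_shift2_ge3 a ij kl ki kj li lj; have := t_diam aij akl; lia.
Qed.

Lemma fork_covered p q m : p.1 != q.1 -> p.1 != m.1 -> m != q ->
  shift1 (shift1 a q) p \in t -> shift1 (shift1 a m) p \in t -> covered t.
Proof.
move=> pq pm /eqP mq apq apm.
have [p_q p_m] := (neq_of_abs pq, neq_of_abs pm).
have [/andP[qm aqm]|no_qm] := boolP ((q.1 != m.1) && (shift1 (shift1 a m) q \in t)).
  constructor 3; exists a, p, q, m; split.
    by rewrite /distinct_abs /= !inE negb_or pq pm qm.
  apply/fsubsetP => w wt; rewrite /tetra /shiftl /= !inE -!orbA.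
  case: (mem_cases wt) => [->|[k w_k]|[k [l [kl w_kl]]]]; first by rewrite eqxx.
    rewrite w_k in wt.
    case: (shift1_mem_cases pq apq wt) (shift1_mem_cases pm apm wt)
      (shift1_mem_cases qm aqm wt) => ? [] ? [] ?; congruence.
  rewrite w_kl in wt *; have k_l := neq_of_abs kl.
  case: (shift2_mem_meet pq kl apq wt) (shift2_mem_meet pm kl apm wt)
    (shift2_mem_meet qm kl aqm wt) => ? [] ? [] ?; subst;
    first [congruence | by rewrite eqxx !orbT | by rewrite shift1C eqxx !orbT].
constructor 1; exists (shift1 a p); apply/fsubsetP => w wt; rewrite in_nbhd.
case: (mem_cases wt) => [->|[k w_k]|[k [l [kl w_kl]]]]; first by rewrite mdist_shift1l.
  rewrite w_k in wt *.
  case: (shift1_mem_cases pq apq wt) (shift1_mem_cases pm apm wt) => ? [] ?; subst;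
    first [congruence | by rewrite mdistxx].
rewrite w_kl in wt *; have k_l := neq_of_abs kl.
case: (shift2_mem_meet pq kl apq wt) (shift2_mem_meet pm kl apm wt) => ? [] ?; subst;
  first [congruence | mdist_le1
        | (exfalso; apply: (negP no_qm); apply/andP; split;
           [by rewrite // eq_sym | by rewrite // shift1C])].
Qed.

Lemma fork_of_not_square i j w : i.1 != j.1 -> shift1 (shift1 a j) i \in t ->
  w \in t -> w \notin square a i j ->
  exists p q m, [/\ p.1 != q.1, p.1 != m.1, m != q,
    shift1 (shift1 a q) p \in t & shift1 (shift1 a m) p \in t].
Proof.
move=> ij aij wt; rewrite /square /shiftl /= !inE -!orbA.
have aji : shift1 (shift1 a i) j \in t by rewrite shift1C.
case: (mem_cases wt) => [->|[k w_k]|[k [l [kl w_kl]]]]; first by rewrite eqxx.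
  by rewrite w_k in wt *; case: (shift1_mem_cases ij aij wt) => ->; rewrite eqxx !orbT.
rewrite w_kl in wt * => w_out.
have ji : j.1 != i.1 by rewrite eq_sym.
have lk : l.1 != k.1 by rewrite eq_sym.
have wt' : shift1 (shift1 a k) l \in t by rewrite shift1C.
case: (shift2_mem_meet ij kl aij wt) => ?; subst.
- by exists i, j, l; split=> //; apply: contraNneq w_out => ->; rewrite eqxx !orbT.
- exists j, i, l; split=> //; apply: contraNneq w_out => ->.
  by rewrite shift1C eqxx !orbT.
- exists i, j, k; split=> //; apply: contraNneq w_out => ->.
  by rewrite shift1C eqxx !orbT.
- by exists j, i, k; split=> //; apply: contraNneq w_out => ->; rewrite eqxx !orbT.
Qed.

End NoDoubleStep.

Lemma simplex_covered n (t : {fset pt n}) : vr2_simplex t -> covered t.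
Proof.
case=> /fset0Pn[a a_in_t] t_diam.
have [|no_double] := boolP [exists y : t, exists i, shift1 (shift1 (val y) i) i \in t].
  case/existsP=> y /existsP[i yii]; constructor 1; exists (shift1 (val y) i).
  apply/fsubsetP => w wt; rewrite in_nbhd.
  by apply: mdist_midpoint_le1; apply: t_diam wt; rewrite ?(valP y).
have t_no_double y i : y \in t -> shift1 (shift1 y i) i \notin t.
  move=> yt; apply: contra no_double => yii.
  by apply/existsP; exists [` yt]; apply/existsP; exists i.
have [|no_shift2] :=
  boolP [exists i, exists j, (i.1 != j.1) && (shift1 (shift1 a j) i \in t)].
  case/existsP=> i /existsP[j /andP[ij aij]].
  have [t_sq|/fsubsetPn[w wt w_out]] := boolP (t `<=` square a i j).
    by constructor 2; exists a, i, j; rewrite /distinct_abs /= inE andbT.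
  have [p [q [m [pq pm mq apq apm]]]] :=
    fork_of_not_square t_diam t_no_double a_in_t ij aij wt w_out.
  exact: (fork_covered t_diam t_no_double a_in_t pq pm mq apq apm).
constructor 1; exists a; apply/fsubsetP => w wt; rewrite in_nbhd.
case: (mem_cases t_diam t_no_double a_in_t wt) => [->|[k ->]|[k [l [kl w_kl]]]].
- by rewrite mdistxx.
- by rewrite mdist_shift1.
- case/negP: no_shift2; apply/existsP; exists k; apply/existsP; exists l.
  by rewrite kl -w_kl.
Qed.

Theorem lemma4p1 (n : nat) (hn : 3 <= n) (t : {fset pt n}) :
  vr2_maximal t ->
  (exists x : pt n, forall y : pt n, (y \in t) = (mdist x y <= 1))
  \/ (exists (x : pt n) (i0 j0 : sidx n),
        distinct_abs [:: i0; j0] /\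
        t = [fset x; shiftl x [:: i0]; shiftl x [:: j0]; shiftl x [:: i0; j0]])
  \/ (exists (x : pt n) (i0 j0 k0 : sidx n),
        distinct_abs [:: i0; j0; k0] /\
        t = [fset x; shiftl x [:: i0; j0]; shiftl x [:: j0; k0];
                     shiftl x [:: i0; k0]]).
Proof.
case=> t_simplex t_max.
case: (simplex_covered t_simplex)
  => [[c t_sub]|[x [i [j [ij t_sub]]]]|[x [i [j [k [ijk t_sub]]]]]].
- left; exists c => y.
  by rewrite -(t_max _ (nbhd_simplex c) t_sub) in_nbhd.
- right; left; exists x, i, j; split=> //.
  exact/esym/t_max/t_sub/square_simplex.
- right; right; exists x, i, j, k; split=> //.
  exact/esym/t_max/t_sub/tetra_simplex.
Qed.
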